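(* Let $X$ be a topological vector space, $Z$ a locally convex topological vector space, $C\subseteq Z$ a nonempty closed convex cone with $C^-\neq\{0\}$, $x_0\in X$, and $f:X\to\mathcal{F}(Z,C)$ convex-valued. Assume there is a set $B\subseteq Z^*$ with $\{tz^*\colon t\ge0,\ z^*\in B\}=C^-$ such that \[ \forall z\in Z:\ \sup_{z^*\in B}z^*(z)<\infty\qquad\text{and}\qquad\forall V\in\mathcal{V}(0):\ \inf_{z^*\in B}\sup_{z\in V}[-z^*(z)]>0, \] and such that the scalarizations are upper semicontinuous at $x_0$ uniformly with respect to $B$, i.e. for every $\varepsilon>0$ there is a neighborhood $U$ of $x_0$ such that for all $x\in U$ and all $z^*\in B$: $\varphi_{(f,z^* )}(x)<-1/\varepsilon$ if $\varphi_{(f,z^* )}(x_0)=-\infty$, and $\varphi_{(f,z^* )}(x)<\varphi_{(f,z^* )}(x_0)+\varepsilon$ otherwise. Then $f$ is lower continuous at $x_0$.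
   Context: $\mathcal{F}(Z,C)=\{A\subseteq Z\colon A=\operatorname{cl}(A+C)\}$ (empty set included); $C^-=\{z^*\in Z^*\colon z^*(z)\le0\ \forall z\in C\}$; $\mathcal{V}(0)$ is the system of neighborhoods of $0$ in $Z$. $\varphi_{(f,z^* )}(x)=\inf_{z\in f(x)}(-z^*(z))$, with $\inf\emptyset=+\infty$. $f$ is lower continuous at $x_0$ iff for every $z_0\in f(x_0)$ and every neighborhood $V$ of $z_0$ there is a neighborhood $U$ of $x_0$ with $f(x)\cap V\neq\emptyset$ for all $x\in U$. *)

From HB Require Import structures.
From mathcomp Require Import all_boot all_order all_algebra.
From mathcomp Require Import all_classical all_reals all_analysis.
Set Implicit Arguments. Unset Strict Implicit. Unset Printing Implicit Defensive.
Import Order.TTheory GRing.Theory Num.Theory.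
Local Open Scope classical_set_scope.
Local Open Scope ring_scope.

Section Defs.
Context (R : realType) (Z : tvsType R).

Definition dual_elt (g : Z -> R) : Prop :=
  linear (g : Z -> R^o) /\ continuous (g : Z -> R^o).

Definition is_cone (C : set Z) : Prop :=
  forall (t : R) z, 0 < t -> C z -> C (t *: z).
Definition closed_convex_cone (C : set Z) : Prop :=
  [/\ closed C, convex_set (C : set (convex_lmodType Z)) & is_cone C].

Definition neg_polar (C : set Z) : set (Z -> R) :=
  [set g | dual_elt g /\ forall z, C z -> g z <= 0].

Definition msum (A C : set Z) : set Z := [set a + c | a in A & c in C].

Definition in_FZC (C A : set Z) : Prop := A = closure (msum A C).

End Defs.

(* scalarization  phi_(f,z* )(x) = inf_{z in f x} (- z*(z)),  inf emptyset = +oo *)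
Definition scalarization (R : realType) (X : Type) (Z : tvsType R)
  (f : X -> set Z) (g : Z -> R) (x : X) : \bar R :=
  ereal_inf [set (- g z)%:E | z in f x].

Definition lower_continuous (R : realType) (X : topologicalType) (Z : tvsType R)
  (f : X -> set Z) (x0 : X) : Prop :=
  forall z0, f x0 z0 -> forall V : set Z, nbhs z0 V ->
    nbhs x0 (fun x => f x `&` V !=set0).

(* Let z0 be in f x0 and let N be an open convex neighbourhood of z0 inside V.
   By hypothesis d := inf_(g in B) sup_(w in N - z0) (- g w) is positive, and
   g z0 is bounded above uniformly in g in B.  For x near x0, f x is nonempty
   (phi_(f,g)(x) = +oo is excluded).  If f x missed N, a continuous functional
   separating f x from N would be bounded above on f x = cl (f x + C), hence lie
   in C^- and be a positive multiple of some g in B; separation then gives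
   - g a >= - g z0 + d for every a in f x, that is
   phi_(f,g)(x) >= - g z0 + d >= phi_(f,g)(x0) + d.  For eps small with respect
   to d and to the bound on g z0, this jump contradicts the uniform upper
   semicontinuity at x0.  The separation theorem comes from the analytic
   Hahn-Banach theorem, proved with Zorn's lemma, applied to the Minkowski
   gauge of a convex neighbourhood of 0. *)

From HB Require Import structures.
From mathcomp Require Import all_boot all_order all_algebra.
From mathcomp Require Import all_classical all_reals all_analysis.
From mathcomp Require Import lra.
Import Order.TTheory GRing.Theory Num.Theory.
Local Open Scope classical_set_scope.
Local Open Scope ring_scope.

Section TvsNbhs.
Context {R : realType} {Z : tvsType R}.

Lemma nbhs_scaler_preimage (c : R) (z : Z) (S : set Z) :
  nbhs (c *: z) S -> nbhs z [set y | S (c *: y)].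
Proof.
move=> Sc; have [[A1 A2] /= [cA1 zA2] A12] := @scale_continuous R Z (c, z) S Sc.
apply: filterS zA2 => y A2y; apply: (A12 (c, y)); split => //=.
exact: nbhs_singleton cA1.
Qed.

Lemma nbhs_scalel_preimage (c : R) (z : Z) (S : set Z) :
  nbhs (c *: z) S -> nbhs (c : R^o) [set s | S (s *: z)].
Proof.
move=> Sc; have [[A1 A2] /= [cA1 zA2] A12] := @scale_continuous R Z (c, z) S Sc.
apply: filterS cA1 => s A1s; apply: (A12 (s, z)); split => //=.
exact: nbhs_singleton zA2.
Qed.

Lemma nbhs_addr_preimage (b z : Z) (S : set Z) :
  nbhs (z + b) S -> nbhs z [set y | S (y + b)].
Proof.
move=> Sb; have [[A1 A2] /= [zA1 bA2] A12] := @add_continuous Z (z, b) S Sb.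
apply: filterS zA1 => y A1y; apply: (A12 (y, b)); split => //=.
exact: nbhs_singleton bA2.
Qed.

Lemma convex_open_nbhs {z : Z} {V : set Z} : nbhs z V ->
  exists N : set Z, [/\ open N, convex_set (N : set (convex_lmodType Z)), N z & N `<=` V].
Proof.
move=> Vz; have [Bs Bs_convex [Bs_open Bs_basis]] := @locally_convex R Z.
have [N [BsN Nz] NV] := Bs_basis z V Vz.
by exists N; split => //; [exact: Bs_open | exact/Bs_convex/mem_set].
Qed.

Lemma convex_setP (A : set Z) : convex_set (A : set (convex_lmodType Z)) ->
  forall x y (l : R), 0 <= l -> l <= 1 -> A x -> A y -> A (l *: x + (1 - l) *: y).
Proof.
move=> cA x y l l0 l1 Ax Ay.
by have := cA x y (Itv01 l0 l1) (mem_set Ax) (mem_set Ay); rewrite inE.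
Qed.

End TvsNbhs.
Arguments convex_setP {R Z A}.

Section MinkowskiGauge.
Context (R : realType) (Z : tvsType R) (K : set Z).
Hypothesis K_convex : forall x y (l : R), 0 <= l -> l <= 1 -> K x -> K y ->
  K (l *: x + (1 - l) *: y).
Hypothesis K_nbhs0 : nbhs (0 : Z) K.

Let K0 : K 0. Proof. exact: nbhs_singleton K_nbhs0. Qed.

Definition gauge_set (z : Z) := [set t : R | 0 < t /\ K (t^-1 *: z)].
Definition gauge (z : Z) := inf (gauge_set z).

(* K absorbs z: small multiples of z lie in K by continuity of s |-> s *: z. *)
Lemma gauge_set_neq0 z : gauge_set z !=set0.
Proof.
have : nbhs (0 : R^o) [set s | K (s *: z)].
  by apply: nbhs_scalel_preimage; rewrite scale0r.
case/nbhs_ballP => e /= e0 He.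
have : K ((e / 2) *: z).
  apply: He; rewrite /ball /= sub0r normrN ger0_norm ?divr_ge0 ?ltW//.
  by rewrite ltr_pdivrMr// ltr_pMr// ltr1n.
by exists (e / 2)^-1; split; rewrite ?invr_gt0 ?divr_gt0// invrK.
Qed.

Lemma gauge_set_lbound z : has_lbound (gauge_set z).
Proof. by exists 0 => t [/ltW]. Qed.

Let gauge_set_inf z := conj (gauge_set_neq0 z) (gauge_set_lbound z).

Lemma gauge_ge0 z : 0 <= gauge z.
Proof. by apply: lb_le_inf; [exact: gauge_set_neq0 | move=> t [/ltW]]. Qed.

Lemma gauge_le1 z : K z -> gauge z <= 1.
Proof.
by move=> Kz; apply: ge_inf; [exact: gauge_set_lbound | split; rewrite ?invr1 ?scale1r].
Qed.

Lemma gauge_lt1 z : gauge z < 1 -> K z.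
Proof.
move=> gz1; have [t [t0 Kt] t1] := inf_adherent (ltac:(by rewrite subr_gt0) :
  0 < 1 - gauge z) (gauge_set_inf z).
rewrite addrC subrK in t1.
have := K_convex _ _ _ (ltW t0) (ltW t1) Kt K0.
by rewrite scaler0 addr0 scalerA divff ?scale1r// gt_eqF.
Qed.

Let gaugeZ_le l z : 0 < l -> gauge (l *: z) <= l * gauge z.
Proof.
move=> l0; rewrite -ler_pdivrMl//; apply: lb_le_inf; first exact: gauge_set_neq0.
move=> t [t0 Kt]; rewrite ler_pdivrMl//; apply: ge_inf; first exact: gauge_set_lbound.
split; first by rewrite mulr_gt0.
by rewrite scalerA invfM mulrAC mulVf ?gt_eqF// mul1r.
Qed.

Lemma gaugeZ l z : 0 < l -> gauge (l *: z) = l * gauge z.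
Proof.
move=> l0; apply/le_anti; rewrite gaugeZ_le//=.
have := @gaugeZ_le l^-1 (l *: z); rewrite invr_gt0 scalerA mulVf ?gt_eqF// scale1r.
by move=> /(_ l0); rewrite -ler_pdivlMl// invrK.
Qed.

(* If s^-1 x and t^-1 y lie in K, so does their convex combination (s + t)^-1 (x + y). *)
Lemma gaugeD x y : gauge (x + y) <= gauge x + gauge y.
Proof.
apply/ler_addgt0Pr => e e0; have e20 : 0 < e / 2 by rewrite divr_gt0.
have [s [s0 Ks] sx] := inf_adherent e20 (gauge_set_inf x).
have [t [t0 Kt] ty] := inf_adherent e20 (gauge_set_inf y).
have st0 : 0 < s + t by rewrite addr_gt0.
apply: (@le_trans _ _ (s + t)); last first.
  by rewrite [e in _ <= _ + e](splitr e) addrACA; apply: lerD; exact: ltW.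
apply: ge_inf; first exact: gauge_set_lbound.
split => //.
have l0 : 0 <= s / (s + t) by rewrite divr_ge0 ?ltW.
have l1 : s / (s + t) <= 1 by rewrite ler_pdivrMr// mul1r lerDl ltW.
have lC : 1 - s / (s + t) = t / (s + t).
  by apply: (mulIf (lt0r_neq0 st0)); rewrite mulrBl mul1r !divfK ?gt_eqF// [s + t]addrC addrK.
have := K_convex _ _ _ l0 l1 Ks Kt; congr K.
rewrite lC !scalerA scalerDr.
by congr (_ *: _ + _ *: _); rewrite mulrAC mulfV ?gt_eqF// mul1r.
Qed.

End MinkowskiGauge.
Arguments gauge {R Z}.
Arguments gauge_ge0 {R Z K}.
Arguments gauge_le1 {R Z K}.
Arguments gauge_lt1 {R Z K}.
Arguments gaugeZ {R Z K}.
Arguments gaugeD {R Z K}.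

Section HahnBanach.
Context (R : realType) (Z : tvsType R) (p : Z -> R) (x1 : Z).
Hypothesis p_ge0 : forall z, 0 <= p z.
Hypothesis pD : forall x y, p (x + y) <= p x + p y.
Hypothesis pZ : forall l z, 0 < l -> p (l *: z) = l * p z.
Hypothesis p_x1 : 1 <= p x1.

Let p0 : p 0 = 0.
Proof. by have := @pZ 2 0 (ltr0Sn R 1); rewrite scaler0 => h; lra. Qed.

(* Graphs of linear functionals on a subspace containing x1, with value 1 at
   x1 and dominated by p; single-valuedness is dominated_graph_functional. *)
Definition dominated_graph (G : set (Z * R)) : Prop :=
  [/\ G (x1, 1),
   forall z r z' r', G (z, r) -> G (z', r') -> G (z + z', r + r'),
   forall l z r, G (z, r) -> G (l *: z, l * r) &
   forall z r, G (z, r) -> r <= p z].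

Section Graph.
Variable G : set (Z * R).
Hypothesis domG : dominated_graph G.

Lemma dominated_graph0 : G (0, 0).
Proof. by case: domG => G1 _ GZ _; have := GZ 0 _ _ G1; rewrite scale0r mul0r. Qed.

Lemma dominated_graph_functional z r r' : G (z, r) -> G (z, r') -> r = r'.
Proof.
case: domG => _ GD GZ Gp Gr Gr'.
have := Gp _ _ (GD _ _ _ _ Gr (GZ (-1) _ _ Gr')).
have := Gp _ _ (GD _ _ _ _ Gr' (GZ (-1) _ _ Gr)).
by rewrite scaleN1r subrr p0 mulN1r; lra.
Qed.

(* By subadditivity of p, r - p (m - y) <= p (m' + y) - r' for any two points
   (m, r), (m', r') of the graph, so a sup lies in between. *)
Lemma dominated_graph_gap y : exists c, forall m r, G (m, r) ->
  r - p (m - y) <= c /\ c <= p (m + y) - r.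
Proof.
case: domG => _ GD _ Gp.
pose S := [set u.2 - p (u.1 - y) | u in G].
have S_ub m r : G (m, r) -> ubound S (p (m + y) - r).
  move=> Gmr _ [[m' r'] Gmr' <-] /=.
  have := Gp _ _ (GD _ _ _ _ Gmr' Gmr); have := pD (m' - y) (m + y).
  by rewrite addrACA addNr addr0; lra.
have S_sup : has_sup S.
  split; first by exists (0 - p (0 - y)), (0, 0) => //; exact: dominated_graph0.
  by exists (p (0 + y) - 0); apply: S_ub; exact: dominated_graph0.
exists (sup S) => m r Gmr; split; last exact: ge_sup (S_sup.1) (S_ub _ _ Gmr).
by apply: (ub_le_sup S_sup.2); exists (m, r).
Qed.

Definition graph_extension y c :=
  [set u | exists m r l, G (m, r) /\ u = (m + l *: y, r + l * c)].

Lemma graph_extension_sub y c : G `<=` graph_extension y c.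
Proof. by move=> [m r] Gmr; exists m, r, 0; rewrite scale0r mul0r !addr0. Qed.

Lemma graph_extension_point y c : graph_extension y c (y, c).
Proof. by exists 0, 0, 1; rewrite scale1r mul1r !add0r; split => //; exact: dominated_graph0. Qed.

Lemma dominated_graph_extension y c :
  (forall m r, G (m, r) -> r - p (m - y) <= c /\ c <= p (m + y) - r) ->
  dominated_graph (graph_extension y c).
Proof.
case: domG => G1 GD GZ Gp cgap; split.
- exact: graph_extension_sub.
- move=> _ _ _ _ [m1 [r1 [l1 [G1' [-> ->]]]]] [m2 [r2 [l2 [G2 [-> ->]]]]].
  exists (m1 + m2), (r1 + r2), (l1 + l2); split; first exact: GD.
  by congr pair; rewrite ?scalerDl ?mulrDl addrACA.
- move=> l0 _ _ [m [r [l [Gmr [-> ->]]]]].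
  exists (l0 *: m), (l0 * r), (l0 * l); split; first exact: GZ.
  by rewrite scalerDr scalerA mulrDr mulrA.
move=> _ _ [m [r [l [Gmr [-> ->]]]]].
have [l0|l0|<-] := ltgtP 0 l; last by rewrite scale0r mul0r !addr0; exact: Gp.
- have [_ c_ub] := cgap _ _ (GZ l^-1 _ _ Gmr).
  have := pZ l (l^-1 *: m + y) l0; rewrite scalerDr scalerA mulfV ?gt_eqF// scale1r => ->.
  have := ler_wpM2l (ltW l0) c_ub; rewrite mulrBr mulrA mulfV ?gt_eqF// mul1r; lra.
- have ml0 : 0 < - l by rewrite oppr_gt0.
  have [c_lb _] := cgap _ _ (GZ (- l)^-1 _ _ Gmr).
  have := pZ (- l) ((- l)^-1 *: m - y) ml0.
  rewrite scalerDr scalerA mulfV ?gt_eqF// scale1r scalerN scaleNr opprK => ->.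
  have := ler_wpM2l (ltW ml0) c_lb; rewrite mulrBr mulrA mulfV ?gt_eqF// mul1r; lra.
Qed.

End Graph.
Arguments dominated_graph_functional {G} domG {z r r'}.
Arguments dominated_graph_gap {G}.
Arguments graph_extension_point {G}.
Arguments dominated_graph_extension {G}.

Lemma dominated_graph_line : dominated_graph [set (l *: x1, l) | l in setT].
Proof.
split.
- by exists 1; rewrite ?scale1r.
- move=> _ _ _ _ [l1 _ [<- <-]] [l2 _ [<- <-]].
  by exists (l1 + l2); rewrite ?scalerDl.
- by move=> l _ _ [l1 _ [<- <-]]; exists (l * l1); rewrite ?scalerA.
move=> _ _ [l _ [<- <-]]; have [l0|l0] := ltP 0 l; first by rewrite pZ// ler_pMr.
exact: le_trans l0 (p_ge0 _).
Qed.

(* Zorn's lemma needs the empty chain, whose union is set0. *)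
Lemma dominated_graph_chain (F : set (set (Z * R))) :
  F `<=` [set G | G = set0 \/ dominated_graph G] -> total_on F subset ->
  \bigcup_(G in F) G = set0 \/ dominated_graph (\bigcup_(G in F) G).
Proof.
move=> Fdom Ftot.
have domF G u : F G -> G u -> dominated_graph G.
  by move=> FG Gu; case: (Fdom G FG) => // G0; rewrite G0 in Gu.
have [[G0 FG0 [u G0u]]|Fempty] := pselect (exists2 G, F G & G !=set0); last first.
  left; apply/seteqP; split => // u [G FG Gu].
  by apply: Fempty; exists G => //; exists u.
right; split.
- by exists G0 => //; case: (domF _ _ FG0 G0u).
- move=> z r z' r' [G1 FG1 G1u] [G2 FG2 G2u].
  have [G12|G21] := Ftot G1 G2 FG1 FG2.
    by exists G2 => //; case: (domF _ _ FG2 G2u) => _ GD _ _; exact: GD (G12 _ G1u) G2u.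
  by exists G1 => //; case: (domF _ _ FG1 G1u) => _ GD _ _; exact: GD G1u (G21 _ G2u).
- move=> l z r [G FG Gu]; exists G => //.
  by case: (domF _ _ FG Gu) => _ _ GZ _; exact: GZ.
- by move=> z r [G FG Gu]; case: (domF _ _ FG Gu) => _ _ _ Gp; exact: Gp.
Qed.

Theorem hahn_banach : exists F : {linear Z -> R^o}, (forall z, F z <= p z) /\ F x1 = 1.
Proof.
have [A [domA maxA]] := Zorn_bigcup dominated_graph_chain.
have {}domA : dominated_graph A.
  case: domA => // A0; exfalso.
  apply: (maxA _ _ (or_intror dominated_graph_line)); split; first by rewrite A0.
  by move=> /(_ (x1, 1)); rewrite A0; apply; exists 1; rewrite ?scale1r.
have A_total z : exists r, A (z, r).
  apply: contrapT => Az; have [c cgap] := dominated_graph_gap domA z.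
  apply: (maxA _ _ (or_intror (dominated_graph_extension domA _ _ cgap))); split.
    exact: graph_extension_sub.
  by move=> /(_ (z, c) (graph_extension_point domA z c)) Azc; apply: Az; exists c.
pose F z := projT1 (cid (A_total z)).
have AF z : A (z, F z) by rewrite /F; case: cid.
case: (domA) => A1 AD AZ Ap.
have F_linear : linear (F : Z -> R^o).
  move=> a u v; apply: (dominated_graph_functional domA (AF _)).
  exact: AD (AZ _ _ _ (AF u)) (AF v).
pose FL : {linear Z -> R^o} := HB.pack F (GRing.isLinear.Build R Z R^o *:%R F F_linear).
exists FL; split => /=.
- by move=> z; exact: Ap.
- exact: (dominated_graph_functional domA (AF x1) A1).
Qed.

End HahnBanach.
Arguments hahn_banach {R Z p x1}.

Section Separation.
Context {R : realType} {Z : tvsType R}.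

Lemma linear_continuous_le1 {F : {linear Z -> R^o}} {K : set Z} :
  nbhs (0 : Z) K -> (forall k, K k -> F k <= 1) -> continuous F.
Proof.
move=> K0 FK z; apply/cvgrPdist_lt => e e0; pose d := e / 2.
have d0 : 0 < d by rewrite divr_gt0.
have KN0 : nbhs (0 : Z) [set k | K k /\ K (- k)].
  apply: filterI => //; have : nbhs ((-1) *: (0 : Z)) K by rewrite scaler0.
  by move/nbhs_scaler_preimage; apply: filterS => k /=; rewrite scaleN1r.
have : nbhs (d^-1 *: (z - z)) [set k | K k /\ K (- k)] by rewrite subrr scaler0.
move/nbhs_scaler_preimage/nbhs_addr_preimage; apply: filterS => y /= [Ky Kny].
have := FK _ Ky; have := FK _ Kny; rewrite linearN linearZ linearB /=.
rewrite -![_ *: _]/(d^-1 * (F y - F z)) => Fy1 Fy2.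
have Fyz : `|F y - F z| <= d.
  rewrite -[F y - F z]mul1r -(mulfV (lt0r_neq0 d0)) -mulrA normrM gtr0_norm//.
  by rewrite ger_pMr// ler_norml; apply/andP; split; lra.
by rewrite distrC (le_lt_trans Fyz)// ltr_pdivrMr// ltr_pMr// ltr1n.
Qed.

Let convex_comb_subr_addr (l : R) (a1 a2 n1 n2 x : Z) :
  l *: (a1 - n1 + x) + (1 - l) *: (a2 - n2 + x) =
  (l *: a1 + (1 - l) *: a2) - (l *: n1 + (1 - l) *: n2) + x.
Proof.
rewrite [x in RHS](_ : x = l *: x + (1 - l) *: x); last first.
  by rewrite -scalerDl addrC subrK scale1r.
by rewrite !scalerDr !scalerN opprD addrACA (addrACA (l *: a1)).
Qed.

(* Separate through the Minkowski gauge of K := A - N + (n0 - a0), a convex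
   neighbourhood of 0 that misses n0 - a0. *)
Lemma convex_open_separation {A N : set Z} {a0 n0 : Z} :
  convex_set (A : set (convex_lmodType Z)) ->
  convex_set (N : set (convex_lmodType Z)) ->
  open N -> A a0 -> N n0 -> A `&` N = set0 ->
  exists F : {linear Z -> R^o},
    [/\ continuous F, F (n0 - a0) = 1 & forall a n, A a -> N n -> F a <= F n].
Proof.
move=> /convex_setP A_convex /convex_setP N_convex N_open Aa0 Nn0 AN0.
pose x1 := n0 - a0; pose K := [set a - n + x1 | a in A & n in N].
have K_convex x y (l : R) : 0 <= l -> l <= 1 -> K x -> K y -> K (l *: x + (1 - l) *: y).
  move=> l0 l1 [a1 Aa1 [n1 Nn1 <-]] [a2 Aa2 [n2 Nn2 <-]].
  exists (l *: a1 + (1 - l) *: a2); first exact: A_convex.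
  exists (l *: n1 + (1 - l) *: n2); first exact: N_convex.
  by rewrite convex_comb_subr_addr.
have K_nbhs0 : nbhs (0 : Z) K.
  have : nbhs ((-1) *: (0 : Z) + n0) N by rewrite scaler0 add0r; exact: open_nbhs_nbhs.
  move/nbhs_addr_preimage/nbhs_scaler_preimage; apply: filterS => k /= Nk.
  exists a0 => //; exists ((-1) *: k + n0) => //.
  by rewrite /x1 scaleN1r opprD opprK addrAC [a0 + _]addrC subrK addrC subrK.
have K_x1 : 1 <= gauge K x1.
  rewrite leNgt; apply/negP => /(gauge_lt1 K_convex K_nbhs0) [a Aa [n Nn]].
  move=> /(canRL (addrK x1)); rewrite subrr => /eqP; rewrite subr_eq0 => /eqP an.
  suff : (A `&` N) a by rewrite AN0.
  by split => //; rewrite an.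
have [F [F_gauge F1]] := hahn_banach (gauge_ge0 K_nbhs0) (gaugeD K_convex K_nbhs0)
  (gaugeZ K_nbhs0) K_x1.
have FK k : K k -> F k <= 1 by move=> Kk; exact: le_trans (F_gauge k) (gauge_le1 _ Kk).
exists F; split => //; first exact: linear_continuous_le1 K_nbhs0 FK.
move=> a n Aa Nn; have : K (a - n + x1) by exists a => //; exists n.
by move/FK; rewrite linearD linearB F1; lra.
Qed.

End Separation.

Section ExtendedRealBounds.
Context {R : realType}.

Lemma ereal_gt0_fin_lbound {e : \bar R} : (0 < e)%E -> exists2 d : R, 0 < d & (d%:E <= e)%E.
Proof.
case: e => [r||] //; first by rewrite lte_fin => r0; exists r.
by exists 1; rewrite ?leey.
Qed.

Lemma ereal_sup_fin_ubound {T : Type} {h : T -> R} {S : set T} :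
  (ereal_sup [set (h t)%:E | t in S] < +oo)%E -> exists M, forall t, S t -> h t <= M.
Proof.
have ub := @ereal_sup_ubound R [set (h t)%:E | t in S].
case: ereal_sup ub => [r||] // ub _.
  by exists r => t St; rewrite -lee_fin; apply: ub; exists t.
by exists 0 => t St; have := ub _ (ex_intro2 _ _ t St erefl); rewrite leNgt ltNye.
Qed.

Lemma usc_tolerance (d M : R) : 0 < d ->
  exists eps : R, [/\ 0 < eps, eps <= d & forall c, c <= M -> - eps^-1 <= - c + d].
Proof.
move=> d0; have dV0 : 0 < d^-1 by rewrite invr_gt0.
have M_norm := ler_norm M; have M_norm0 := normr_ge0 M.
exists (d^-1 + `|M|)^-1; split; first by rewrite invr_gt0; lra.
  rewrite -[X in X <= _]mul1r ler_pdivrMr; last by lra.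
  by rewrite mulrDr mulfV ?gt_eqF//; have := mulr_ge0 (ltW d0) M_norm0; lra.
by move=> c cM; rewrite invrK; lra.
Qed.

(* With b := phi(x0) <= -c and a := phi(x) >= -c + d, neither alternative of
   the upper semicontinuity estimate can hold. *)
Lemma usc_excludes_gap {a b : \bar R} {c d eps : R} :
  eps <= d -> - eps^-1 <= - c + d -> (b <= (- c)%:E)%E -> ((- c + d)%:E <= a)%E ->
  (b = -oo%E -> (a < (- eps^-1)%:E)%E) -> (b <> -oo%E -> (a < b + eps%:E)%E) -> False.
Proof.
move=> epsd cd bc ca; have [->|b_fin] := eqVneq b (-oo%E).
  move=> /(_ erefl) /(le_lt_trans ca); rewrite lte_fin => gap _.
  by move: epsd cd gap; clear; lra.
move=> _ /(_ (elimN eqP b_fin)) /(le_lt_trans ca).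
case: b bc b_fin => [r||] //; rewrite ?lee_fin -?EFinD ?lte_fin => rc _ gap.
by move: epsd rc gap; clear; lra.
Qed.

End ExtendedRealBounds.

Section Scalarization.
Context {R : realType} {X : Type} {Z : tvsType R} {f : X -> set Z}.

Lemma scalarization_set0 g x : f x = set0 -> scalarization f g x = +oo%E.
Proof. by move=> fx0; rewrite /scalarization fx0 image_set0 ereal_inf0. Qed.

Lemma usc_scalarization_neq0 g x x0 (eps : R) :
  (scalarization f g x0 = -oo%E -> (scalarization f g x < (- eps^-1)%:E)%E) ->
  (scalarization f g x0 <> -oo%E ->
     (scalarization f g x < scalarization f g x0 + eps%:E)%E) ->
  f x !=set0.
Proof.
move=> usc_oo usc_fin; apply: contrapT => /nonemptyPn fx0.
rewrite (scalarization_set0 g x fx0) in usc_oo usc_fin.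
by case: (eqVneq (scalarization f g x0) (-oo%E)) => [/usc_oo|/eqP/usc_fin]; rewrite ltNge leey.
Qed.

Lemma scalarization_le g x z : f x z -> (scalarization f g x <= (- g z)%:E)%E.
Proof. by move=> fxz; apply: ereal_inf_lbound; exists z. Qed.

Lemma scalarization_ge_separated {g : Z -> R} {x N z0} {d : R} :
  linear (g : Z -> R^o) -> (forall a n, f x a -> N n -> g a <= g n) ->
  (d%:E <= ereal_sup [set (- g w)%:E | w in [set w | N (w + z0)%R]])%E ->
  ((- g z0 + d)%:E <= scalarization f g x)%E.
Proof.
move=> g_lin g_sep dW; apply: le_ereal_inf_tmp => _ [a fxa <-]; rewrite lee_fin.
suff : d <= g z0 - g a by lra.
rewrite -lee_fin (le_trans dW)//; apply: ge_ereal_sup => _ [w Nw <-].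
have := g_sep _ _ fxa Nw; have := g_lin 1 w z0; rewrite !scale1r => ->.
by rewrite lee_fin; lra.
Qed.

End Scalarization.

Section NegativePolar.
Context {R : realType} {Z : tvsType R} {C : set Z}.

Lemma neg_polar0 : neg_polar C (fun _ => 0).
Proof.
split; last by move=> z _; rewrite lexx.
by split; [move=> a u v /=; rewrite scaler0 addr0 | exact: cst_continuous].
Qed.

Lemma neg_polar_of_ubound {A : set Z} {F : {linear Z -> R^o}} {M : R} :
  is_cone C -> in_FZC C A -> A !=set0 -> continuous F ->
  (forall a, A a -> F a <= M) -> neg_polar C F.
Proof.
move=> C_cone AC [a0 Aa0] F_cont FM; split; first by split => //; exact: linearP.
move=> c Cc; rewrite leNgt; apply/negP => Fc0.
pose t := (M - F a0 + 1) / F c.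
have t0 : 0 < t by rewrite divr_gt0//; have := FM _ Aa0; lra.
have : A (a0 + t *: c).
  by rewrite AC; apply: subset_closure; exists a0 => //; exists (t *: c); [exact: C_cone|].
move/FM; rewrite linearD linearZ /= -[_ *: _]/(t * F c) divfK ?gt_eqF//; lra.
Qed.

Section Generators.
Context {B : set (Z -> R)}.
Hypothesis B_generates :
  [set (fun z => t * g z) | t in [set t : R | 0 <= t] & g in B] = neg_polar C.

Lemma generator_neg_polar {g} : B g -> neg_polar C g.
Proof.
move=> Bg; rewrite -B_generates; exists 1; first exact: ler01.
by exists g => //; apply/funext => z; rewrite mul1r.
Qed.

Lemma generators_neq0 : B !=set0.
Proof. by have := neg_polar0; rewrite -B_generates => -[t _ [g Bg _]]; exists g. Qed.

(* A functional separating A from N is bounded on A by its value at n0, hence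
   lies in C^- and is a positive multiple of a generator. *)
Lemma generator_separation {A N : set Z} {n0 : Z} :
  is_cone C -> in_FZC C A -> A !=set0 ->
  convex_set (A : set (convex_lmodType Z)) ->
  convex_set (N : set (convex_lmodType Z)) -> open N -> N n0 -> A `&` N = set0 ->
  exists2 g, B g & forall a n, A a -> N n -> g a <= g n.
Proof.
move=> C_cone AC [a0 Aa0] A_convex N_convex N_open Nn0 AN0.
have [F [F_cont F1 F_sep]] := convex_open_separation A_convex N_convex N_open Aa0 Nn0 AN0.
have : neg_polar C F.
  apply: (neg_polar_of_ubound C_cone AC (ex_intro _ a0 Aa0) F_cont) => a Aa.
  exact: F_sep _ _ Aa Nn0.
rewrite -B_generates => -[t /= t0 [g Bg tgF]]; exists g => // a n Aa Nn.
have F_tg z : F z = t * g z by rewrite -tgF.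
have t_gt0 : 0 < t.
  rewrite lt0r t0 andbT; apply/eqP => t00.
  by move: F1; rewrite F_tg t00 mul0r => /eqP; rewrite eq_sym oner_eq0.
by have := F_sep _ _ Aa Nn; rewrite !F_tg ler_pM2l.
Qed.

End Generators.
End NegativePolar.

Theorem mainTheorem16 (R : realType) (X : topologicalLmodType R) (Z : tvsType R)
  (C : set Z) (x0 : X) (f : X -> set Z) (B : set (Z -> R)) :
  C !=set0 ->
  closed_convex_cone C ->
  neg_polar C <> [set (fun _ : Z => 0 : R)] ->
  (forall x, in_FZC C (f x)) ->
  (forall x, convex_set (f x : set (convex_lmodType Z))) ->
  [set (fun z => t * g z) | t in [set t : R | 0 <= t] & g in B] = neg_polar C ->
  (forall z : Z, (ereal_sup [set (g z)%:E | g in B] < +oo)%E) ->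
  (forall V : set Z, nbhs (0 : Z) V ->
     (0 < ereal_inf [set ereal_sup [set (- g z)%:E | z in V] | g in B])%E) ->
  (forall eps : R, 0 < eps ->
     exists U : set X, nbhs x0 U /\
       forall x, U x -> forall g, B g ->
         (scalarization f g x0 = -oo%E ->
            (scalarization f g x < (- eps^-1)%:E)%E) /\
         (scalarization f g x0 <> -oo%E ->
            (scalarization f g x < scalarization f g x0 + eps%:E)%E)) ->
  lower_continuous f x0.
Proof.
move=> _ [_ _ C_cone] _ fC f_convex B_gen B_sup B_inf f_usc z0 fz0 V Vz0.
have [N [N_open N_convex Nz0 NV]] := convex_open_nbhs Vz0.
pose W := [set w | N (w + z0)].
have W0 : nbhs (0 : Z) W.
  by apply: nbhs_addr_preimage; rewrite add0r; exact: open_nbhs_nbhs.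
have [d d0 dW] := ereal_gt0_fin_lbound (B_inf W W0).
have [M BM] := ereal_sup_fin_ubound (B_sup z0).
have [eps [eps0 eps_d eps_M]] := usc_tolerance d M d0.
have [U [Ux0 U_usc]] := f_usc eps eps0.
apply: filterS Ux0 => x Ux; apply: contrapT => fxV.
have fx_neq0 : f x !=set0.
  have [g0 Bg0] := generators_neq0 B_gen.
  by have [] := U_usc x Ux g0 Bg0; exact: usc_scalarization_neq0.
have fxN0 : f x `&` N = set0.
  by apply/seteqP; split => // z [fxz Nz]; apply: fxV; exists z; split; [|exact: NV].
have [g Bg g_sep] := generator_separation B_gen C_cone (fC x) fx_neq0 (f_convex x)
  N_convex N_open Nz0 fxN0.
have [[g_lin _] _] := generator_neg_polar B_gen Bg.
have [usc_oo usc_fin] := U_usc x Ux g Bg.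
apply: (usc_excludes_gap eps_d (eps_M _ (BM g Bg)) (scalarization_le g x0 z0 fz0)) usc_oo usc_fin.
apply: (scalarization_ge_separated g_lin g_sep).
by apply: le_trans dW _; apply: ereal_inf_lbound; exists g.
Qed.
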